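(* Let $d,k,t\ge 0$ be integers with $t\le d$. Then $2f(k,d)\le f(k,d-t)+f(k,d+t)$.
   Context: For a graph $G=(V,E)$ and an integer $k\ge 0$, a $k$-independent set is a set $S\subseteq V$ such that the induced subgraph $G[S]$ has maximum degree at most $k$; $\alpha_k(G)$ denotes the maximum cardinality of a $k$-independent set of $G$. $n(G)$ is the number of vertices and $d(G)=2|E(G)|/n(G)$ the average degree. For integers $d,k\ge 0$, $f(k,d)=\inf\left\{\frac{\alpha_k(G)}{n(G)} : G \text{ a finite simple graph with at least one vertex and } d(G)\le d\right\}$. *)

From Stdlib Require Import Bool Reals Arith List ClassicalEpsilon.
Import ListNotations.
Open Scope R_scope.

(* A finite simple graph on vertex set {0, ..., gn - 1}: symmetric,
   irreflexive adjacency (values outside the range are ignored). *)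
Record graph := Graph {
  gn : nat;
  gadj : nat -> nat -> bool;
  gadj_sym : forall i j, gadj i j = gadj j i;
  gadj_irr : forall i, gadj i i = false
}.

Definition verts (G : graph) : list nat := seq 0 (gn G).

Definition deg_in (G : graph) (S : nat -> bool) (v : nat) : nat :=
  length (filter (fun u => gadj G v u && S u) (verts G)).

Definition deg (G : graph) (v : nat) : nat := deg_in G (fun _ => true) v.

(* sum of degrees = 2 |E(G)| *)
Definition sum_deg (G : graph) : nat :=
  fold_right Nat.add 0%nat (map (deg G) (verts G)).

Definition avg_deg (G : graph) : R := INR (sum_deg G) / INR (gn G).

Definition card_set (G : graph) (S : nat -> bool) : nat :=
  length (filter S (verts G)).

Definition k_independent (G : graph) (k : nat) (S : nat -> bool) : Prop :=
  forall v, (v < gn G)%nat -> S v = true -> (deg_in G S v <= k)%nat.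

Definition is_alpha_k (G : graph) (k a : nat) : Prop :=
  (exists S, k_independent G k S /\ card_set G S = a) /\
  (forall S, k_independent G k S -> (card_set G S <= a)%nat).

Definition ratios (k d : nat) (r : R) : Prop :=
  exists G : graph, (0 < gn G)%nat /\ avg_deg G <= INR d /\
    exists a, is_alpha_k G k a /\ r = INR a / INR (gn G).

Definition is_glb (E : R -> Prop) (m : R) : Prop :=
  (forall x, E x -> m <= x) /\ (forall b, (forall x, E x -> b <= x) -> b <= m).

(* f(k,d) = inf of the ratios (the infimum exists: the set is nonempty
   and bounded below by 0). *)
Definition fkd (k d : nat) : R :=
  epsilon (inhabits 0) (fun m => is_glb (ratios k d) m).

From Stdlib Require Import Bool Reals Arith List Lia Lra ClassicalEpsilon.
Open Scope R_scope.

(* The values alpha_k(G)/n(G) are stable under "averaging":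
   if G1 has average degree at most d1 and G2 at most d2 with
   d1 + d2 = 2d, then the disjoint union of n(G2) copies of G1 and
   n(G1) copies of G2 has average degree at most d, and (since alpha_k
   is additive over disjoint unions) its ratio is the arithmetic mean of
   the ratios of G1 and G2.  Passing to infima gives
   2 f(k,d) <= f(k,d-t) + f(k,d+t). *)

Lemma seq_shift_add (m n a : nat) :
  seq (a + m) n = map (fun u => (u + m)%nat) (seq a n).
Proof.
  revert a; induction n as [|n IH]; intros a; simpl; [reflexivity|].
  f_equal. replace (S (a + m)) with (S a + m)%nat by lia. apply IH.
Qed.

Lemma seq_split (n1 n2 : nat) :
  seq 0 (n1 + n2) = seq 0 n1 ++ map (fun u => (u + n1)%nat) (seq 0 n2).
Proof. rewrite seq_app, <- seq_shift_add. reflexivity. Qed.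

Lemma count_split (f : nat -> bool) (n1 n2 : nat) :
  length (filter f (seq 0 (n1 + n2))) =
  (length (filter f (seq 0 n1))
   + length (filter (fun u => f (u + n1)%nat) (seq 0 n2)))%nat.
Proof.
  rewrite seq_split, filter_app, length_app. f_equal.
  induction (seq 0 n2) as [|x l IH]; simpl; [reflexivity|].
  destruct (f (x + n1)%nat); simpl; lia.
Qed.

Lemma sum_split (h : nat -> nat) (n1 n2 : nat) :
  list_sum (map h (seq 0 (n1 + n2))) =
  (list_sum (map h (seq 0 n1))
   + list_sum (map (fun u => h (u + n1)%nat) (seq 0 n2)))%nat.
Proof. rewrite seq_split, map_app, list_sum_app, map_map. reflexivity. Qed.

Lemma count_ext (f g : nat -> bool) (n : nat) :
  (forall u, (u < n)%nat -> f u = g u) ->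
  length (filter f (seq 0 n)) = length (filter g (seq 0 n)).
Proof.
  intros H. f_equal. apply filter_ext_in.
  intros a Ha. apply in_seq in Ha. apply H; lia.
Qed.

Lemma sum_ext (f g : nat -> nat) (n : nat) :
  (forall u, (u < n)%nat -> f u = g u) ->
  list_sum (map f (seq 0 n)) = list_sum (map g (seq 0 n)).
Proof.
  intros H. f_equal. apply map_ext_in.
  intros a Ha. apply in_seq in Ha. apply H; lia.
Qed.

Lemma count_false (n : nat) : length (filter (fun _ => false) (seq 0 n)) = 0%nat.
Proof. induction (seq 0 n); simpl; auto. Qed.

(* G2 is placed on the vertices gn G1, ..., gn G1 + gn G2 - 1; no edge
   joins the two parts. *)
Definition union_adj (G1 G2 : graph) (i j : nat) : bool :=
  match Nat.ltb i (gn G1), Nat.ltb j (gn G1) with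
  | true, true => gadj G1 i j
  | false, false => gadj G2 (i - gn G1) (j - gn G1)
  | _, _ => false
  end.

Lemma union_adj_sym G1 G2 i j : union_adj G1 G2 i j = union_adj G1 G2 j i.
Proof.
  unfold union_adj.
  destruct (Nat.ltb i (gn G1)), (Nat.ltb j (gn G1)); auto using gadj_sym.
Qed.

Lemma union_adj_irr G1 G2 i : union_adj G1 G2 i i = false.
Proof. unfold union_adj. destruct (Nat.ltb i (gn G1)); auto using gadj_irr. Qed.

Definition gunion (G1 G2 : graph) : graph :=
  Graph (gn G1 + gn G2) (union_adj G1 G2) (union_adj_sym G1 G2) (union_adj_irr G1 G2).

Lemma deg_in_ext G S S' v :
  (forall u, (u < gn G)%nat -> S u = S' u) -> deg_in G S v = deg_in G S' v.
Proof. intros H. apply count_ext. intros u Hu. rewrite H; auto. Qed.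

Lemma card_ext G S S' :
  (forall u, (u < gn G)%nat -> S u = S' u) -> card_set G S = card_set G S'.
Proof. intros H. apply count_ext; auto. Qed.

Lemma deg_in_union_l G1 G2 S v :
  (v < gn G1)%nat -> deg_in (gunion G1 G2) S v = deg_in G1 S v.
Proof.
  intros Hv. unfold deg_in, verts. simpl. rewrite count_split.
  assert (Hv' : Nat.ltb v (gn G1) = true) by (apply Nat.ltb_lt; exact Hv).
  rewrite (count_ext (fun u => union_adj G1 G2 v (u + gn G1) && S (u + gn G1)%nat)
                     (fun _ => false)), count_false, Nat.add_0_r.
  - apply count_ext. intros u Hu. unfold union_adj.
    rewrite Hv', (proj2 (Nat.ltb_lt u _) Hu). reflexivity.
  - intros u _. unfold union_adj.
    rewrite Hv', (proj2 (Nat.ltb_ge (u + gn G1) _)) by lia. reflexivity.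
Qed.

Lemma deg_in_union_r G1 G2 S v :
  (gn G1 <= v)%nat ->
  deg_in (gunion G1 G2) S v = deg_in G2 (fun u => S (u + gn G1)%nat) (v - gn G1).
Proof.
  intros Hv. unfold deg_in, verts. simpl. rewrite count_split.
  assert (Hv' : Nat.ltb v (gn G1) = false) by (apply Nat.ltb_ge; exact Hv).
  rewrite (count_ext (fun u => union_adj G1 G2 v u && S u) (fun _ => false)), count_false.
  - apply count_ext. intros u _. unfold union_adj.
    rewrite Hv', (proj2 (Nat.ltb_ge (u + gn G1) _)), Nat.add_sub by lia. reflexivity.
  - intros u Hu. unfold union_adj.
    rewrite Hv', (proj2 (Nat.ltb_lt u _) Hu). reflexivity.
Qed.

Lemma sum_deg_union G1 G2 : sum_deg (gunion G1 G2) = (sum_deg G1 + sum_deg G2)%nat.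
Proof.
  unfold sum_deg, verts. simpl. rewrite sum_split. f_equal.
  - apply sum_ext. intros u Hu. apply deg_in_union_l; exact Hu.
  - apply sum_ext. intros u _. unfold deg.
    rewrite deg_in_union_r, Nat.add_sub by lia. reflexivity.
Qed.

Lemma card_union G1 G2 S :
  card_set (gunion G1 G2) S =
  (card_set G1 S + card_set G2 (fun u => S (u + gn G1)%nat))%nat.
Proof. apply count_split. Qed.

(* alpha_k is additive over disjoint unions: a k-independent set of the
   union is exactly the union of k-independent sets of the two parts. *)
Lemma alpha_union G1 G2 k a1 a2 :
  is_alpha_k G1 k a1 -> is_alpha_k G2 k a2 -> is_alpha_k (gunion G1 G2) k (a1 + a2).
Proof.
  intros [[S1 [HS1 HC1]] HU1] [[S2 [HS2 HC2]] HU2].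
  assert (Hshift : forall u, (u < gn G2)%nat ->
    (if Nat.ltb (u + gn G1) (gn G1) then S1 (u + gn G1)%nat else S2 (u + gn G1 - gn G1)%nat) = S2 u).
  { intros u _. rewrite (proj2 (Nat.ltb_ge _ _)), Nat.add_sub by lia. reflexivity. }
  assert (Hlow : forall u, (u < gn G1)%nat ->
    (if Nat.ltb u (gn G1) then S1 u else S2 (u - gn G1)%nat) = S1 u).
  { intros u Hu. rewrite (proj2 (Nat.ltb_lt _ _) Hu). reflexivity. }
  split.
  - exists (fun u => if Nat.ltb u (gn G1) then S1 u else S2 (u - gn G1)%nat). split.
    + intros v Hv Hsv. simpl in Hv. destruct (Nat.ltb v (gn G1)) eqn:E.
      * apply Nat.ltb_lt in E. rewrite deg_in_union_l, (deg_in_ext _ _ S1) by assumption.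
        apply HS1; assumption.
      * apply Nat.ltb_ge in E. rewrite deg_in_union_r, (deg_in_ext _ _ S2) by assumption.
        apply HS2; [lia | assumption].
    + rewrite card_union, (card_ext G1 _ S1), (card_ext G2 _ S2) by assumption. lia.
  - intros S HS. rewrite card_union.
    assert (card_set G1 S <= a1)%nat.
    { apply HU1. intros v Hv Hsv.
      rewrite <- (deg_in_union_l G1 G2) by exact Hv. apply HS; simpl; [lia | exact Hsv]. }
    assert (card_set G2 (fun u => S (u + gn G1)%nat) <= a2)%nat.
    { apply HU2. intros v Hv Hsv.
      replace v with (v + gn G1 - gn G1)%nat by lia.
      rewrite <- (deg_in_union_r G1 G2) by lia. apply HS; simpl; [lia | exact Hsv]. }
    lia.
Qed.

Definition gempty : graph :=
  Graph 0 (fun _ _ => false) (fun _ _ => eq_refl) (fun _ => eq_refl).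

Fixpoint copies (G : graph) (m : nat) : graph :=
  match m with O => gempty | S m => gunion G (copies G m) end.

Lemma gn_copies G m : gn (copies G m) = (m * gn G)%nat.
Proof. induction m; simpl; auto. Qed.

Lemma sum_deg_copies G m : sum_deg (copies G m) = (m * sum_deg G)%nat.
Proof. induction m as [|m IH]; simpl; [reflexivity|]. rewrite sum_deg_union, IH. reflexivity. Qed.

Lemma alpha_copies G k a m : is_alpha_k G k a -> is_alpha_k (copies G m) k (m * a).
Proof.
  intros H. induction m as [|m IH]; simpl.
  - split.
    + exists (fun _ => false). split; [intros v Hv; simpl in Hv; lia | reflexivity].
    + intros S _. unfold card_set, verts. simpl. lia.
  - apply alpha_union; assumption.
Qed.

Definition gone : graph :=
  Graph 1 (fun _ _ => false) (fun _ _ => eq_refl) (fun _ => eq_refl).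

Lemma card_le G S : (card_set G S <= gn G)%nat.
Proof.
  unfold card_set, verts. rewrite <- (length_seq (gn G) 0) at 2.
  apply filter_length_le.
Qed.

Lemma ratios_one k d : ratios k d 1.
Proof.
  exists gone. split; [simpl; lia|]. split.
  - unfold avg_deg. simpl. unfold sum_deg, deg, deg_in, verts. simpl.
    replace (0 / 1) with 0 by field. apply pos_INR.
  - exists 1%nat. split; [|simpl; field].
    split.
    + exists (fun _ => true). split; [|reflexivity].
      intros v _ _. unfold deg_in, verts. simpl. lia.
    + intros S _. apply card_le.
Qed.

Lemma ratios_nonneg k d r : ratios k d r -> 0 <= r.
Proof.
  intros [G [Hn [_ [a [_ ->]]]]].
  apply Rmult_le_pos; [apply pos_INR|].
  apply Rlt_le, Rinv_0_lt_compat, lt_0_INR; exact Hn.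
Qed.

(* Completeness of R applied to the negated set gives the infimum. *)
Lemma ratios_glb_exists k d : exists m, is_glb (ratios k d) m.
Proof.
  destruct (completeness (fun x => ratios k d (- x))) as [m [Hub Hlub]].
  - exists 0. intros x Hx. apply ratios_nonneg in Hx. lra.
  - exists (-1). replace (- -1) with 1 by ring. apply ratios_one.
  - exists (- m). split.
    + intros x Hx. assert (- x <= m) by (apply Hub; rewrite Ropp_involutive; exact Hx). lra.
    + intros b Hb. assert (m <= - b) by (apply Hlub; intros x Hx; specialize (Hb _ Hx); lra).
      lra.
Qed.

Lemma fkd_glb k d : is_glb (ratios k d) (fkd k d).
Proof. unfold fkd. apply epsilon_spec, ratios_glb_exists. Qed.

Lemma avg_deg_le_iff G d :
  (0 < gn G)%nat -> (avg_deg G <= INR d <-> (sum_deg G <= d * gn G)%nat).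
Proof.
  intros Hn. assert (Hpos : 0 < INR (gn G)) by (apply lt_0_INR; exact Hn).
  unfold avg_deg. split; intros H.
  - apply INR_le. apply (Rmult_le_compat_r (INR (gn G))) in H; [|lra].
    rewrite mult_INR. unfold Rdiv in H. rewrite Rmult_assoc, Rinv_l, Rmult_1_r in H by lra.
    exact H.
  - apply le_INR in H. rewrite mult_INR in H.
    apply (Rmult_le_reg_r (INR (gn G))); [exact Hpos|].
    unfold Rdiv. rewrite Rmult_assoc, Rinv_l, Rmult_1_r by lra. exact H.
Qed.

(* The union of n(G2) copies of G1 and n(G1) copies of G2 gives equal
   weight to G1 and G2: its average degree and alpha_k-ratio are the
   means of those of G1 and G2. *)
Lemma ratios_midpoint k d d1 d2 r1 r2 :
  (d1 + d2 = 2 * d)%nat -> ratios k d1 r1 -> ratios k d2 r2 ->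
  ratios k d ((r1 + r2) / 2).
Proof.
  intros Hd [G1 [Hn1 [Hdeg1 [a1 [Ha1 ->]]]]] [G2 [Hn2 [Hdeg2 [a2 [Ha2 ->]]]]].
  set (n1 := gn G1) in *. set (n2 := gn G2) in *.
  pose (M := gunion (copies G1 n2) (copies G2 n1)).
  assert (Hn : gn M = (n2 * n1 + n1 * n2)%nat) by (simpl; rewrite !gn_copies; reflexivity).
  exists M. split; [rewrite Hn; nia|]. split.
  - apply avg_deg_le_iff; [rewrite Hn; nia|].
    apply avg_deg_le_iff in Hdeg1, Hdeg2; try assumption.
    rewrite Hn. unfold M. rewrite sum_deg_union, !sum_deg_copies. nia.
  - exists (n2 * a1 + n1 * a2)%nat. split.
    + apply alpha_union; apply alpha_copies; assumption.
    + rewrite Hn, !plus_INR, !mult_INR.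
      assert (0 < INR n1) by (apply lt_0_INR; exact Hn1).
      assert (0 < INR n2) by (apply lt_0_INR; exact Hn2).
      field. split; [nra | split; lra].
Qed.

Lemma glb_midpoint (A B C : R -> Prop) a b c :
  is_glb A a -> is_glb B b -> is_glb C c ->
  (forall x y, B x -> C y -> A ((x + y) / 2)) ->
  2 * a <= b + c.
Proof.
  intros [HlowA _] [_ HgreatB] [_ HgreatC] Hmid.
  assert (2 * a - b <= c). 2: lra.
  apply HgreatC. intros y Hy.
  assert (2 * a - y <= b). 2: lra.
  apply HgreatB. intros x Hx.
  specialize (HlowA _ (Hmid x y Hx Hy)). lra.
Qed.

Theorem mainTheorem3 (d k t : nat) (htd : (t <= d)%nat) :
  2 * fkd k d <= fkd k (d - t) + fkd k (d + t).
Proof.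
  apply (glb_midpoint (ratios k d) (ratios k (d - t)) (ratios k (d + t)));
    try apply fkd_glb.
  intros r1 r2. apply ratios_midpoint. lia.
Qed.
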